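(* Let $|q|<1$, let $x,y$ be complex numbers and let $n,m\ge 0$ be integers. Then $$h_n(x,y|q)\,h_m(x,y|q)=\sum_{l=0}^{\min\{m,n\}}\sum_{k=0}^{\min\{m,n\}}{m\brack l}{n\brack l}{m-l\brack k}{n-l\brack k}(q;q)_k(q;q)_l(-1)^k x^l y^k q^{\binom{k}{2}}\,h_{n+m-2l-k}(x,y|q).$$
   Context: Throughout $|q|<1$. $(a;q)_n=\prod_{j=0}^{n-1}(1-aq^j)$, ${n\brack k}=\frac{(q;q)_n}{(q;q)_k(q;q)_{n-k}}$ for $0\le k\le n$ and ${n\brack k}=0$ for $k>n$. $P_n(x,y)=(x-y)(x-qy)\cdots(x-q^{n-1}y)$ with $P_0=1$, and $h_n(x,y|q)=\sum_{k=0}^n{n\brack k}P_k(x,y)$. *)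

From HB Require Import structures.
From mathcomp Require Import all_boot all_order all_algebra.
From mathcomp Require Import reals complex.
Set Implicit Arguments. Unset Strict Implicit. Unset Printing Implicit Defensive.
Import Order.TTheory GRing.Theory Num.Theory.
Local Open Scope ring_scope.

Section Defs.
Variable C : fieldType.

Definition qpoch (a q : C) (n : nat) : C := \prod_(j < n) (1 - a * q ^+ j).

Definition qbinom (q : C) (n k : nat) : C :=
  if (k <= n)%N then qpoch q q n / (qpoch q q k * qpoch q q (n - k)) else 0.

Definition Pn (q x y : C) (n : nat) : C := \prod_(j < n) (x - q ^+ j * y).

Definition hn (q x y : C) (n : nat) : C :=
  \sum_(0 <= k < n.+1) qbinom q n k * Pn q x y k.
End Defs.

From HB Require Import structures.
From mathcomp Require Import all_boot all_order all_algebra.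
From mathcomp Require Import reals complex.
From mathcomp Require Import ring zify.
Import Order.TTheory GRing.Theory Num.Theory.
Local Open Scope ring_scope.

(* Both sides, as sequences in m, satisfy the three-term recurrence
     h_{m+1} = (1 + x - y q^m) h_m - x (1 - q^m) h_{m-1}
   of the polynomials h_m themselves (a consequence of the q-Pascal rule and of
   absorption for Gaussian binomials), and they agree at m = 0.  For the double
   sum, q-Pascal gives a four-term recurrence in m for the coefficient
   tau_m(l,k) = [hprod_coef m l k] of h_{n+m-2l-k}; after shifting l or k by
   one, the terms regroup as
     tau_m(l,k) (h_{N+1} + x (1 - q^N) h_{N-1} + y (q^N - q^m) h_N)
       = (1 + x - y q^m) tau_m(l,k) h_N,    N = n + m - 2l - k,
   by the recurrence of h_N.  The hypothesis |q| < 1 only serves to make every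
   (q;q)_j nonzero. *)

Lemma sumr_nat_trunc {V : nmodType} (F : nat -> V) {b B} :
  (b <= B)%N -> (forall i, (b <= i)%N -> F i = 0) ->
  \sum_(0 <= i < B) F i = \sum_(0 <= i < b) F i.
Proof.
move=> le_bB F0; rewrite (@big_cat_nat _ _ _ b) //=.
by rewrite [X in _ + X]big_nat_cond [X in _ + X]big1 ?addr0 // => i /andP[/andP[/F0]].
Qed.

Lemma sumr_nat_shift {V : nmodType} (F G : nat -> V) B :
  F 0%N = 0 -> G B = 0 -> (forall i, (i < B)%N -> F i.+1 = G i) ->
  \sum_(0 <= i < B.+1) F i = \sum_(0 <= i < B.+1) G i.
Proof.
move=> F0 GB FG; rewrite big_nat_recl // [RHS]big_nat_recr //= F0 GB add0r addr0.
by apply: eq_big_nat => i /andP[_ /FG].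
Qed.

Lemma norm_lt1_expS_neq1 (R : numDomainType) (z : R) :
  `|z| < 1 -> forall j, z ^+ j.+1 != 1.
Proof.
move=> z_lt1 j; apply/eqP => zj1.
have : `|z ^+ j.+1| < 1 by rewrite normrX exprn_ilt1.
by rewrite zj1 normr1 ltxx.
Qed.

Section Linearization.
Variables (C : fieldType) (q : C).
Hypothesis q_not_root1 : forall j, q ^+ j.+1 != 1.

Local Notation qf := (qpoch q q).
Local Notation qb := (qbinom q).

Lemma qpoch0 : qf 0 = 1.
Proof. by rewrite /qpoch big_ord0. Qed.

Lemma qpochS j : qf j.+1 = qf j * (1 - q ^+ j.+1).
Proof. by rewrite /qpoch big_ord_recr /= exprS. Qed.

Lemma subr1X_neq0 j : 1 - q ^+ j.+1 != 0.
Proof. by rewrite subr_eq0 eq_sym q_not_root1. Qed.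

Lemma qpoch_neq0 j : qf j != 0.
Proof.
elim: j => [|j IH]; first by rewrite qpoch0 oner_neq0.
by rewrite qpochS mulf_neq0 ?subr1X_neq0.
Qed.

Local Ltac qfield := field; by rewrite ?subr1X_neq0 ?qpoch_neq0.

Lemma qbinomE n k : (k <= n)%N -> qb n k = qf n / (qf k * qf (n - k)).
Proof. by rewrite /qbinom => ->. Qed.

Lemma qbinom_small n k : (n < k)%N -> qb n k = 0.
Proof. by move=> lt_nk; rewrite /qbinom leqNgt lt_nk. Qed.

Lemma qbinomE_add k d : qb (k + d) k = qf (k + d) / (qf k * qf d).
Proof. by rewrite qbinomE ?leq_addr // addKn. Qed.

Lemma qbinomn0 n : qb n 0 = 1.
Proof. by rewrite -[n]add0n qbinomE_add qpoch0 mul1r divff ?qpoch_neq0. Qed.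

Lemma qbinomnn n : qb n n = 1.
Proof. by rewrite -{1}[n]addn0 qbinomE_add addn0 qpoch0 mulr1 divff ?qpoch_neq0. Qed.

Lemma mul_qbinom_left n k :
  (1 - q ^+ k.+1) * qb n k.+1 = (1 - q ^+ (n - k)) * qb n k.
Proof.
have [lt_kn | le_nk] := ltnP k n; last first.
  rewrite qbinom_small ?ltnS // mulr0.
  by move: le_nk; rewrite -subn_eq0 => /eqP ->; rewrite expr0 subrr mul0r.
have [d ->] : exists d, n = (k + d.+1)%N by exists (n - k.+1)%N; lia.
rewrite addKn qbinomE_add -addSnnS qbinomE_add qpochS (qpochS d).
qfield.
Qed.

Lemma mul_qbinom_down n k :
  (1 - q ^+ n) * qb n.-1 k = (1 - q ^+ (n - k)) * qb n k.
Proof.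
case: n => [|n]; first by rewrite sub0n expr0 subrr !mul0r.
have [le_kn | lt_nk] := leqP k n; last first.
  rewrite qbinom_small // mulr0.
  by move: lt_nk; rewrite -subn_eq0 => /eqP ->; rewrite expr0 subrr mul0r.
have [d ->] : exists d, n = (k + d)%N by exists (n - k)%N; lia.
rewrite /= -addnS addKn !qbinomE_add addnS !qpochS.
qfield.
Qed.

Lemma qbinomS_qpochS n k :
  qb n k.+1 * qf k.+1 = qb n k * qf k * (1 - q ^+ (n - k)).
Proof.
rewrite qpochS; transitivity (qf k * ((1 - q ^+ k.+1) * qb n k.+1)); first ring.
by rewrite mul_qbinom_left; ring.
Qed.

Lemma qbinomS n k : qb n.+1 k.+1 = qb n k.+1 + q ^+ (n - k) * qb n k.
Proof.
have [lt_kn | gt_kn | ->] := ltngtP k n.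
- have [d ->] : exists d, n = (k + d.+1)%N by exists (n - k.+1)%N; lia.
  rewrite !qbinomE; try lia.
  have -> : ((k + d.+1).+1 - k.+1 = d.+1)%N by lia.
  have -> : (k + d.+1 - k.+1 = d)%N by lia.
  rewrite addKn !qpochS -addSn exprD.
  qfield.
- by rewrite !qbinom_small ?mulr0 ?addr0 //; lia.
- by rewrite qbinomnn qbinom_small // add0r subnn expr0 mul1r qbinomnn.
Qed.

Lemma qbinomS_alt n k : qb n.+1 k.+1 = qb n k + q ^+ k.+1 * qb n k.+1.
Proof.
rewrite qbinomS.
transitivity (qb n k + q ^+ k.+1 * qb n k.+1
  + ((1 - q ^+ k.+1) * qb n k.+1 - (1 - q ^+ (n - k)) * qb n k)); first ring.
by rewrite mul_qbinom_left subrr addr0.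
Qed.

Lemma qbinom_trinomial n l k : qb n l * qb (n - l) k = qb n (l + k) * qb (l + k) l.
Proof.
have [le_lkn | lt_nlk] := leqP (l + k) n; last first.
  rewrite [qb n (l + k)]qbinom_small // mul0r.
  have [le_ln | lt_nl] := leqP l n; last by rewrite qbinom_small // mul0r.
  by rewrite [qb (n - l) k]qbinom_small ?mulr0 //; lia.
have [d ->] : exists d, n = (l + k + d)%N by exists (n - (l + k))%N; lia.
rewrite -addnA addKn !qbinomE_add addnA qbinomE_add.
qfield.
Qed.

Lemma qbinom_qpoch l k : qb (l + k) l * qf l * qf k = qf (l + k).
Proof. rewrite qbinomE_add; qfield. Qed.

Variables x y : C.

Local Notation P := (Pn q x y).
Local Notation h := (hn q x y).

Lemma PnS k : P k.+1 = P k * (x - q ^+ k * y).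
Proof. by rewrite /Pn big_ord_recr. Qed.

Lemma hn0 : h 0 = 1.
Proof. by rewrite /hn big_nat1 qbinomn0 /Pn big_ord0 mul1r. Qed.

Lemma hn_widen {n B} : (n < B)%N -> h n = \sum_(0 <= k < B) qb n k * P k.
Proof.
by move=> lt_nB; rewrite /hn (sumr_nat_trunc _ lt_nB) // => k /qbinom_small ->; rewrite mul0r.
Qed.

Lemma hnS n : h n.+1 = (1 + x - y * q ^+ n) * h n - x * (1 - q ^+ n) * h n.-1.
Proof.
have pascal : h n.+1 = h n + \sum_(0 <= k < n.+1) q ^+ (n - k) * qb n k * P k.+1.
  rewrite /hn big_nat_recl // [in RHS]big_nat_recl // !qbinomn0 -addrA; congr (_ + _).
  under eq_bigr do rewrite qbinomS mulrDl.
  by rewrite big_split /= big_nat_recr //= qbinom_small // mul0r addr0.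
have absorb : \sum_(0 <= k < n.+1) q ^+ (n - k) * qb n k * P k = h n - (1 - q ^+ n) * h n.-1.
  rewrite (hn_widen (ltnSn n)) (hn_widen (n := n.-1) (B := n.+1)); last lia.
  rewrite mulr_sumr -sumrB; apply: eq_bigr => k _.
  by rewrite mulrA mul_qbinom_down; ring.
have shift_q : \sum_(0 <= k < n.+1) q ^+ (n - k) * qb n k * (P k * q ^+ k) = q ^+ n * h n.
  rewrite (hn_widen (ltnSn n)) mulr_sumr; apply: eq_big_nat => k /andP[_ lt_kn].
  by rewrite -[X in _ = q ^+ X * _](subnK (ltnSE lt_kn)) exprD; ring.
rewrite pascal; under eq_bigr do rewrite PnS.
have -> : \sum_(0 <= k < n.+1) q ^+ (n - k) * qb n k * (P k * (x - q ^+ k * y)) =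
    x * \sum_(0 <= k < n.+1) q ^+ (n - k) * qb n k * P k
    - y * \sum_(0 <= k < n.+1) q ^+ (n - k) * qb n k * (P k * q ^+ k).
  by rewrite !mulr_sumr -sumrB; apply: eq_bigr => k _; ring.
by rewrite absorb shift_q; ring.
Qed.

Variable n : nat.

Definition hprod_coef m l k :=
  qb m l * qb n l * qb (m - l) k * qb (n - l) k
  * qf k * qf l * (-1) ^+ k * x ^+ l * y ^+ k * q ^+ 'C(k, 2).

Local Notation w l k := ((-1) ^+ k * x ^+ l * y ^+ k * q ^+ 'C(k, 2)).

Lemma hprod_coefE m l k :
  hprod_coef m l k = qb m (l + k) * qb (l + k) l * (qb n (l + k) * qf (l + k)) * w l k.
Proof.
rewrite /hprod_coef -(qbinom_qpoch l k).
transitivity (qb m l * qb (m - l) k * (qb n l * qb (n - l) k) * qf l * qf k * w l k).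
  by ring.
by rewrite !qbinom_trinomial; ring.
Qed.

Lemma hprod_coef_eq0 m l k : (minn m n < l + k)%N -> hprod_coef m l k = 0.
Proof. by rewrite gtn_min => /orP[] lt_lk; rewrite hprod_coefE (qbinom_small _ _ lt_lk); ring. Qed.

Lemma hprod_coef_pred m l k :
  (1 - q ^+ m) * hprod_coef m.-1 l k =
  (1 - q ^+ (m - (l + k))) * qb m (l + k) * qb (l + k) l * (qb n (l + k) * qf (l + k)) * w l k.
Proof. by rewrite hprod_coefE !mulrA mul_qbinom_down. Qed.

Lemma hprod_coef_rec0S m k :
  hprod_coef m.+1 0 k.+1 =
  hprod_coef m 0 k.+1 + y * (q ^+ (n + m - k) - q ^+ m) * hprod_coef m 0 k.
Proof.
have [lt_k | le_k] := ltnP (minn m n) k.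
  by rewrite !hprod_coef_eq0 ?mulr0 ?addr0 //; lia.
rewrite !hprod_coefE !add0n !qbinomn0 qbinomS qbinomS_qpochS.
have -> : q ^+ (n + m - k) = q ^+ m * q ^+ (n - k).
  by rewrite -exprD; congr (_ ^+ _); lia.
have -> : q ^+ m = q ^+ (m - k) * q ^+ k by rewrite -exprD subnK //; lia.
by rewrite binS bin1 exprD !exprS; ring.
Qed.

Lemma hprod_coef_recS0 m l :
  hprod_coef m.+1 l.+1 0 =
  hprod_coef m l.+1 0 + x * (1 - q ^+ (n + m - 2 * l)) * hprod_coef m l 0
  - x * (1 - q ^+ m) * hprod_coef m.-1 l 0.
Proof.
have [lt_l | le_l] := ltnP (minn m n) l.
  by rewrite !hprod_coef_eq0 ?mulr0 ?addr0 ?subr0 //; lia.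
rewrite -[_ * hprod_coef m.-1 _ _]mulrA hprod_coef_pred.
rewrite !hprod_coefE !addn0 !qbinomnn qbinomS qbinomS_qpochS.
have -> : q ^+ (n + m - 2 * l) = q ^+ (n - l) * q ^+ (m - l).
  by rewrite -exprD; congr (_ ^+ _); lia.
by rewrite !exprS; ring.
Qed.

Lemma hprod_coef_recSS m l k :
  hprod_coef m.+1 l.+1 k.+1 =
  hprod_coef m l.+1 k.+1 + x * (1 - q ^+ (n + m - 2 * l - k.+1)) * hprod_coef m l k.+1
  + y * (q ^+ (n + m - 2 * l.+1 - k) - q ^+ m) * hprod_coef m l.+1 k
  - x * (1 - q ^+ m) * hprod_coef m.-1 l k.+1.
Proof.
have [lt_s | le_s] := ltnP (minn m n) (l + k.+1).
  by rewrite !hprod_coef_eq0 ?mulr0 ?addr0 ?subr0 //; lia.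
rewrite -[_ * hprod_coef m.-1 _ _]mulrA hprod_coef_pred !hprod_coefE.
rewrite (_ : l.+1 + k.+1 = (l + k.+1).+1)%N // addSnnS.
set s := (l + k.+1)%N.
rewrite qbinomS qbinomS_alt qbinomS_qpochS.
have absorb := mul_qbinom_left s l.
rewrite (_ : s - l = k.+1)%N in absorb; last by rewrite /s; lia.
have -> : q ^+ (n + m - 2 * l - k.+1) = q ^+ (n - s) * q ^+ (m - s) * q ^+ k.+1.
  by rewrite -!exprD; congr (_ ^+ _); rewrite /s; lia.
have -> : q ^+ (n + m - 2 * l.+1 - k) = q ^+ (n - s) * q ^+ (m - s) * q ^+ k.
  by rewrite -!exprD; congr (_ ^+ _); rewrite /s; lia.
have -> : q ^+ m = q ^+ (m - s) * q ^+ l * q ^+ k.+1.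
  by rewrite -!exprD; congr (_ ^+ _); rewrite /s; lia.
(* The difference of the two sides is a multiple of an instance of [mul_qbinom_left]. *)
apply/eqP; rewrite -subr_eq0; apply/eqP.
transitivity (qb m s * (qb n s * qf s) * q ^+ (n - s) * q ^+ (m - s)
  * (- x * x ^+ l * y * y ^+ k * (-1) ^+ k * q ^+ 'C(k, 2) * q ^+ k)
  * ((1 - q ^+ l.+1) * qb s l.+1 - (1 - q ^+ k.+1) * qb s l)).
  by rewrite binS bin1 exprD !exprS; ring.
by rewrite absorb subrr mulr0.
Qed.

Lemma hprod_coef_rec m l k :
  hprod_coef m.+1 l k = hprod_coef m l k
  + (if l is l'.+1 then x * (1 - q ^+ (n + m - 2 * l' - k)) * hprod_coef m l' k else 0)
  + (if k is k'.+1 then y * (q ^+ (n + m - 2 * l - k') - q ^+ m) * hprod_coef m l k' else 0)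
  - (if l is l'.+1 then x * (1 - q ^+ m) * hprod_coef m.-1 l' k else 0).
Proof.
case: l k => [|l] [|k]; rewrite ?addr0 ?subr0.
- by rewrite !hprod_coefE !qbinomn0.
- by rewrite hprod_coef_rec0S muln0 subn0.
- by rewrite hprod_coef_recS0 subn0.
- exact: hprod_coef_recSS.
Qed.

Definition hprod_sum m B :=
  \sum_(0 <= l < B) \sum_(0 <= k < B) hprod_coef m l k * h (n + m - 2 * l - k).

Lemma hprod_sum_bound m b B : (minn m n < b <= B)%N -> hprod_sum m B = hprod_sum m b.
Proof.
case/andP=> lt_b le_bB; rewrite /hprod_sum (sumr_nat_trunc _ le_bB); last first.
  move=> l le_bl; rewrite big1 // => k _.
  by rewrite hprod_coef_eq0 ?mul0r //; lia.
apply: eq_bigr => l _; rewrite (sumr_nat_trunc _ le_bB) // => k le_bk.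
by rewrite hprod_coef_eq0 ?mul0r //; lia.
Qed.

Lemma hprod_sum0 B : (0 < B)%N -> hprod_sum 0 B = h n.
Proof.
move=> B_gt0; rewrite (@hprod_sum_bound 0 1 B) ?min0n //.
rewrite /hprod_sum !big_nat1 /hprod_coef !qbinomn0 qpoch0 !expr0 !mulr1 mul1r.
by rewrite addn0 muln0 !subn0.
Qed.

Lemma hprod_sumS_shifted m B : (m < B)%N ->
  hprod_sum m.+1 B.+1 =
  \sum_(0 <= l < B.+1) \sum_(0 <= k < B.+1) hprod_coef m l k *
    (h (n + m.+1 - 2 * l - k)
     + x * (1 - q ^+ (n + m - 2 * l - k)) * h (n + m - 2 * l - k).-1
     + y * (q ^+ (n + m - 2 * l - k) - q ^+ m) * h (n + m - 2 * l - k))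
  - x * (1 - q ^+ m) * hprod_sum m.-1 B.+1.
Proof.
move=> lt_mB.
have shift_x :
    \sum_(0 <= l < B.+1) \sum_(0 <= k < B.+1)
      (if l is l'.+1 then x * (1 - q ^+ (n + m - 2 * l' - k)) * hprod_coef m l' k else 0)
      * h (n + m.+1 - 2 * l - k) =
    \sum_(0 <= l < B.+1) \sum_(0 <= k < B.+1)
      x * (1 - q ^+ (n + m - 2 * l - k)) * hprod_coef m l k * h (n + m - 2 * l - k).-1.
  rewrite exchange_big [RHS]exchange_big; apply: eq_bigr => k _.
  apply: sumr_nat_shift => [|| l _]; first by rewrite /= mul0r.
    by rewrite hprod_coef_eq0 ?mulr0 ?mul0r //; lia.
  by congr (_ * h _); lia.
have shift_y :
    \sum_(0 <= l < B.+1) \sum_(0 <= k < B.+1)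
      (if k is k'.+1 then y * (q ^+ (n + m - 2 * l - k') - q ^+ m) * hprod_coef m l k' else 0)
      * h (n + m.+1 - 2 * l - k) =
    \sum_(0 <= l < B.+1) \sum_(0 <= k < B.+1)
      y * (q ^+ (n + m - 2 * l - k) - q ^+ m) * hprod_coef m l k * h (n + m - 2 * l - k).
  apply: eq_bigr => l _; apply: sumr_nat_shift => [|| k _]; first by rewrite /= mul0r.
    by rewrite hprod_coef_eq0 ?mulr0 ?mul0r //; lia.
  by congr (_ * h _); lia.
have shift_z :
    \sum_(0 <= l < B.+1) \sum_(0 <= k < B.+1)
      (if l is l'.+1 then x * (1 - q ^+ m) * hprod_coef m.-1 l' k else 0)
      * h (n + m.+1 - 2 * l - k) =
    x * (1 - q ^+ m) * hprod_sum m.-1 B.+1.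
  case: m lt_mB {shift_x shift_y} => [|m] lt_mB /=.
    rewrite expr0 subrr mulr0 mul0r; apply: big1 => l _; apply: big1 => k _.
    by case: l => [|l]; rewrite ?expr0 ?subrr ?mulr0 !mul0r.
  rewrite /hprod_sum exchange_big [in RHS]exchange_big mulr_sumr; apply: eq_bigr => k _.
  rewrite mulr_sumr; apply: sumr_nat_shift => [|| l _]; first by rewrite /= mul0r.
    by rewrite hprod_coef_eq0 ?mul0r ?mulr0 //; lia.
  by rewrite mulrA; congr (_ * h _); lia.
rewrite {1}/hprod_sum.
under eq_bigr => l _ do under eq_bigr => k _ do rewrite hprod_coef_rec mulrBl !mulrDl.
under eq_bigr => l _ do rewrite sumrB !big_split /=.
rewrite sumrB !big_split /= shift_x shift_y shift_z -!big_split; congr (_ - _).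
by apply: eq_bigr => l _; rewrite -!big_split; apply: eq_bigr => k _ /=; ring.
Qed.

Lemma hprod_sumS m B : (m < B)%N ->
  hprod_sum m.+1 B.+1 =
  (1 + x - y * q ^+ m) * hprod_sum m B.+1 - x * (1 - q ^+ m) * hprod_sum m.-1 B.+1.
Proof.
move=> lt_mB; rewrite hprod_sumS_shifted //; congr (_ - _).
rewrite /hprod_sum mulr_sumr; apply: eq_bigr => l _.
rewrite mulr_sumr; apply: eq_bigr => k _.
have [lt_lk | le_lk] := ltnP (minn m n) (l + k).
  by rewrite hprod_coef_eq0 //; ring.
rewrite (_ : n + m.+1 - 2 * l - k = (n + m - 2 * l - k).+1)%N; last lia.
by rewrite hnS; ring.
Qed.

Lemma hprod_sumE m B : (m < B)%N -> h m * h n = hprod_sum m B.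
Proof.
elim/ltn_ind: m B => -[_ B B_gt0 | m IH [//|B] lt_mB]; first by rewrite hn0 mul1r hprod_sum0.
have IHm : h m * h n = hprod_sum m B.+1 by apply: IH; lia.
have IHm1 : h m.-1 * h n = hprod_sum m.-1 B.+1 by apply: IH; lia.
rewrite hprod_sumS; last lia.
by rewrite -IHm -IHm1 hnS; ring.
Qed.

End Linearization.

Theorem corollary3p4 (R : realType) (q x y : R[i]) (n m : nat) :
  `|q| < 1 ->
  hn q x y n * hn q x y m =
  \sum_(0 <= l < (minn m n).+1) \sum_(0 <= k < (minn m n).+1)
     qbinom q m l * qbinom q n l * qbinom q (m - l) k * qbinom q (n - l) k
     * qpoch q q k * qpoch q q l * (-1) ^+ k * x ^+ l * y ^+ k
     * q ^+ 'C(k, 2) * hn q x y (n + m - 2 * l - k).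
Proof.
move=> /norm_lt1_expS_neq1 q_not_root1.
rewrite mulrC (@hprod_sumE _ q q_not_root1 x y n m m.+1) //.
by rewrite (@hprod_sum_bound _ q q_not_root1 x y n m (minn m n).+1) // ltnSn ltnS geq_minl.
Qed.
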